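(* Let $S=s_1,\ldots,s_n$ be a sequence of nonnegative integers with mean $\mu$, let $\gamma>0$, $k$ a positive integer and $\epsilon>0$. Let $(L,\alpha,\beta)$ be an optimal solution of $\textsc{Geo}$ for $S,\gamma,k$. Let $\sigma=\frac{\mu}{1/n+\mu}$ and $\alpha'=\sigma^{\epsilon/k}$. If $\alpha\ge\alpha'$, then \[ \mathrm{score}_{\mathrm{geo}}(L,S;\alpha',\beta,\gamma)\le(1+\epsilon)\,\mathrm{score}_{\mathrm{geo}}(L,S;\alpha,\beta,\gamma). \]
   Context: A level sequence is $L=\ell_1,\ldots,\ell_n$ of integers with $0\le\ell_i\le k$; set $\ell_0=0$. The penalty is $\mathrm{pen}(x,y)=\max(y-x,0)\,\gamma\log n$. The geometric distribution is $p_{\mathrm{geo}}(s;\lambda)=(1-\lambda)\lambda^s$ (with $0^0=1$). For $0\le\alpha<1$, $0<\beta<1$: $\mathrm{score}_{\mathrm{geo}}(L,S;\alpha,\beta,\gamma)=\sum_{i=1}^n\big[-\log p_{\mathrm{geo}}(s_i;\beta\alpha^{\ell_i})+\mathrm{pen}(\ell_{i-1},\ell_i)\big]$. Problem $\textsc{Geo}$: given $S,\gamma,k$, find $L$, $\alpha$ and $\beta$ minimizing this score. *)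

(* concrete reals R, with Coquelicot's extended reals Rbar
   to represent -log 0 = +oo honestly. *)
From Stdlib Require Import Reals Lra List.
From Coquelicot Require Import Coquelicot.
Open Scope R_scope.

(* -log p_geo(s; lam), where p_geo(s; lam) = (1-lam) lam^s with 0^0 = 1.
   When lam = 0 and s > 0 the probability is 0, so -log is +oo. *)
Definition neglog_pgeo (s : nat) (lam : R) : Rbar :=
  if Req_EM_T lam 0 then
    (match s with O => Finite (- ln (1 - lam)) | S _ => p_infty end)
  else Finite (- ln ((1 - lam) * lam ^ s)).

Definition pen (gamma : R) (n : nat) (x y : nat) : R :=
  Rmax (INR y - INR x) 0 * gamma * ln (INR n).

(* sum_{i} [ -log p_geo(s_i; beta alpha^{l_i}) + pen(l_{i-1}, l_i) ],
   with prev = l_{i-1}; n is the length of the full sequence S. *)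
Fixpoint score_aux (n : nat) (prev : nat) (L S : list nat)
  (alpha beta gamma : R) : Rbar :=
  match L, S with
  | l :: L', s :: S' =>
      Rbar_plus
        (Rbar_plus (neglog_pgeo s (beta * alpha ^ l)) (Finite (pen gamma n prev l)))
        (score_aux n l L' S' alpha beta gamma)
  | _, _ => Finite 0
  end.

Definition score_geo (L S : list nat) (alpha beta gamma : R) : Rbar :=
  score_aux (length S) 0 L S alpha beta gamma.

Definition valid_levels (k : nat) (S L : list nat) : Prop :=
  length L = length S /\ List.Forall (fun l => (l <= k)%nat) L.

Definition valid_params (alpha beta : R) : Prop :=
  0 <= alpha < 1 /\ 0 < beta < 1.

Definition geo_optimal (S : list nat) (gamma : R) (k : nat)
  (L : list nat) (alpha beta : R) : Prop :=
  valid_levels k S L /\ valid_params alpha beta /\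
  forall L' alpha' beta', valid_levels k S L' -> valid_params alpha' beta' ->
    Rbar_le (score_geo L S alpha beta gamma) (score_geo L' S alpha' beta' gamma).

Definition mean (S : list nat) : R :=
  INR (fold_right Nat.add 0%nat S) / INR (length S).

(* x^y for x >= 0, y > 0, with 0^y = 0 (Stdlib's Rpower is junk at 0). *)
Definition rpow (x y : R) : R :=
  if Req_EM_T x 0 then 0 else Rpower x y.

(* Write T = s_1 + ... + s_n, so that sigma = T / (T + 1).  Lowering alpha to
   alpha' raises the i-th term by at most s_i l_i (ln alpha - ln alpha'), which is
   at most s_i eps (- ln sigma) because l_i <= k and ln alpha <= 0.  Summing, the
   additive loss is at most eps T ln (1 + 1/T) <= eps.  If T >= 1, some s_i >= 1
   and its term is at least -ln ((1 - lam) lam) >= ln 4 >= 1, so the score is at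
   least 1 and absorbs the loss multiplicatively.  If T = 0, then alpha' = 0 and
   only the terms -ln (1 - beta alpha^l) remain, which grow with alpha. *)

From Stdlib Require Import Reals List Lra Lia.
From Coquelicot Require Import Coquelicot.
Open Scope R_scope.

Lemma In_le_list_sum s S : In s S -> (s <= list_sum S)%nat.
Proof.
  induction S as [|s' S IH]; simpl; [contradiction|].
  intros [-> | Hs]; [|specialize (IH Hs)]; lia.
Qed.

Lemma pow_le_1 x n : 0 <= x <= 1 -> x ^ n <= 1.
Proof. intros Hx; rewrite <- (pow1 n); apply pow_incr; lra. Qed.

(* Agrees with [neglog_pgeo] wherever p_geo does not vanish (see [neglog_pgeo_finite]). *)
Definition geo_nll (s : nat) (lam : R) : R := - ln ((1 - lam) * lam ^ s).

Lemma neglog_pgeo_finite s lam :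
  lam <> 0 \/ s = 0%nat -> neglog_pgeo s lam = Finite (geo_nll s lam).
Proof.
  intros Hlam; unfold neglog_pgeo, geo_nll.
  destruct (Req_EM_T lam 0) as [Hzero|]; [subst lam|reflexivity].
  destruct Hlam as [Hlam| ->]; [contradiction|].
  simpl; rewrite Rmult_1_r; reflexivity.
Qed.

Lemma geo_pmf_bounds s lam : 0 <= lam < 1 -> (0 < lam \/ s = 0%nat) ->
  0 < (1 - lam) * lam ^ s <= 1.
Proof.
  intros Hlam Hs.
  assert (Hpow : 0 < lam ^ s) by (destruct Hs as [Hs| ->]; [apply pow_lt | simpl]; lra).
  assert (lam ^ s <= 1) by (apply pow_le_1; lra).
  split; nra.
Qed.

Lemma geo_nll_ge0 s lam : 0 <= lam < 1 -> (0 < lam \/ s = 0%nat) -> 0 <= geo_nll s lam.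
Proof.
  intros Hlam Hs; destruct (geo_pmf_bounds s lam Hlam Hs) as [Hp Hp1].
  assert (ln ((1 - lam) * lam ^ s) <= ln 1) by (apply ln_le; assumption).
  rewrite ln_1 in *; unfold geo_nll; lra.
Qed.

(* An observation s >= 1 has probability at most (1 - lam) lam <= 1/4 < 1/e. *)
Lemma geo_nll_ge1 s lam : 0 < lam < 1 -> (0 < s)%nat -> 1 <= geo_nll s lam.
Proof.
  intros Hlam Hs; destruct s as [|s]; [lia|].
  assert (0 <= lam ^ s <= 1) by (split; [apply pow_le | apply pow_le_1]; lra).
  assert (Hquarter : (1 - lam) * lam ^ S s <= / 4).
  { assert ((1 - lam) * lam <= / 4)
      by (pose proof (Rle_0_sqr (lam - / 2)); unfold Rsqr in *; nra).
    replace ((1 - lam) * lam ^ S s) with ((1 - lam) * lam * lam ^ s) by (simpl; ring).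
    assert (0 <= (1 - lam) * lam) by nra.
    nra. }
  assert (Hln4 : 1 <= ln 4).
  { replace 4 with (2 * 2) by lra; rewrite ln_mult by lra; pose proof ln_lt_2; lra. }
  assert (ln ((1 - lam) * lam ^ S s) <= ln (/ 4)).
  { apply ln_le; [apply (geo_pmf_bounds (S s)) | exact Hquarter]; lra. }
  rewrite ln_Rinv in * by lra; unfold geo_nll; lra.
Qed.

Lemma geo_nll_level_split s l b x : 0 < b < 1 -> 0 < x < 1 ->
  geo_nll s (b * x ^ l) = - ln (1 - b * x ^ l) - INR s * (ln b + INR l * ln x).
Proof.
  intros Hb Hx.
  assert (0 < x ^ l) by (apply pow_lt; lra).
  assert (x ^ l <= 1) by (apply pow_le_1; lra).
  unfold geo_nll; rewrite ln_mult, ln_pow, ln_mult, ln_pow by (try apply pow_lt; nra).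
  ring.
Qed.

Lemma geo_nll_level_shift s l a a' b : 0 < a' <= a -> a < 1 -> 0 < b < 1 ->
  geo_nll s (b * a' ^ l) <= geo_nll s (b * a ^ l) + INR s * (INR l * (ln a - ln a')).
Proof.
  intros Ha' Ha Hb.
  rewrite !geo_nll_level_split by lra.
  assert (b * a' ^ l <= b * a ^ l) by (apply Rmult_le_compat_l; [lra | apply pow_incr; lra]).
  assert (b * a ^ l < 1) by (pose proof (pow_le_1 a l ltac:(lra)); nra).
  assert (ln (1 - b * a ^ l) <= ln (1 - b * a' ^ l)) by (apply ln_le; lra).
  lra.
Qed.

Lemma geo_nll0_le x y : 0 <= x <= y -> y < 1 -> geo_nll 0 x <= geo_nll 0 y.
Proof.
  intros Hxy Hy; unfold geo_nll; simpl; rewrite !Rmult_1_r.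
  apply Ropp_le_contravar, ln_le; lra.
Qed.

Fixpoint score_real (n prev : nat) (L S : list nat) (a b g : R) : R :=
  match L, S with
  | l :: L', s :: S' => geo_nll s (b * a ^ l) + pen g n prev l + score_real n l L' S' a b g
  | _, _ => 0
  end.

Lemma score_aux_finite n p L S a b g : 0 < b ->
  (0 < a \/ forall s, In s S -> s = 0%nat) ->
  score_aux n p L S a b g = Finite (score_real n p L S a b g).
Proof.
  intros Hb; revert p S; induction L as [|l L IH]; intros p [|s S] Hterm; try reflexivity.
  simpl; rewrite neglog_pgeo_finite, IH; [reflexivity| |].
  - destruct Hterm as [|Hzero]; [left | right; intros; apply Hzero; right]; assumption.
  - destruct Hterm as [|Hzero]; [left | right; apply Hzero; left; reflexivity].
    apply Rgt_not_eq, Rmult_lt_0_compat, pow_lt; assumption.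
Qed.

Lemma pen_ge0 g n p l : 0 < g -> (1 <= n)%nat -> 0 <= pen g n p l.
Proof.
  intros Hg Hn; unfold pen.
  assert (1 <= INR n) by (apply (le_INR 1); assumption).
  assert (0 <= ln (INR n)) by (rewrite <- ln_1; apply ln_le; lra).
  pose proof (Rmax_r (INR l - INR p) 0).
  apply Rmult_le_pos; [apply Rmult_le_pos|]; lra.
Qed.

Lemma score_real_ge0 n p L S a b g : 0 <= a < 1 -> 0 < b < 1 -> 0 < g -> (1 <= n)%nat ->
  (0 < a \/ forall s, In s S -> s = 0%nat) -> 0 <= score_real n p L S a b g.
Proof.
  intros Ha Hb Hg Hn; revert p S; induction L as [|l L IH]; intros p [|s S] Hterm;
    simpl; try lra.
  assert (0 <= a ^ l <= 1) by (split; [apply pow_le | apply pow_le_1]; lra).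
  assert (0 <= geo_nll s (b * a ^ l)).
  { apply geo_nll_ge0; [nra|].
    destruct Hterm as [|Hzero]; [left | right; apply Hzero; left; reflexivity].
    apply Rmult_lt_0_compat, pow_lt; lra. }
  assert (0 <= score_real n l L S a b g).
  { apply IH; destruct Hterm as [|Hzero]; [left | right; intros; apply Hzero; right]; assumption. }
  pose proof (pen_ge0 g n p l Hg Hn); lra.
Qed.

Lemma score_real_ge1 n p L S a b g : 0 < a < 1 -> 0 < b < 1 -> 0 < g -> (1 <= n)%nat ->
  length L = length S -> (0 < list_sum S)%nat -> 1 <= score_real n p L S a b g.
Proof.
  intros Ha Hb Hg Hn; revert p S; induction L as [|l L IH]; intros p [|s S] HL HT;
    simpl in *; try discriminate; [lia|].
  assert (Hlam : 0 < b * a ^ l < 1)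
    by (pose proof (pow_lt a l ltac:(lra)); pose proof (pow_le_1 a l ltac:(lra)); nra).
  pose proof (pen_ge0 g n p l Hg Hn).
  pose proof (geo_nll_ge0 s (b * a ^ l) ltac:(lra) (or_introl (proj1 Hlam))).
  pose proof (score_real_ge0 n l L S a b g ltac:(lra) Hb Hg Hn (or_introl (proj1 Ha))).
  destruct (Nat.eq_dec s 0) as [-> | Hs].
  - pose proof (IH l S ltac:(lia) HT); lra.
  - pose proof (geo_nll_ge1 s (b * a ^ l) Hlam ltac:(lia)); lra.
Qed.

Lemma score_real_shift_le n p L S a a' b g c : length L = length S ->
  (forall l s, In l L -> In s S -> geo_nll s (b * a' ^ l) <= geo_nll s (b * a ^ l) + INR s * c) ->
  score_real n p L S a' b g <= score_real n p L S a b g + c * INR (list_sum S).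
Proof.
  revert p S; induction L as [|l L IH]; intros p [|s S] HL Hterm; simpl in *;
    try discriminate; [lra|].
  rewrite plus_INR.
  pose proof (Hterm l s (or_introl eq_refl) (or_introl eq_refl)).
  pose proof (IH l S ltac:(lia) (fun l' s' Hl Hs => Hterm l' s' (or_intror Hl) (or_intror Hs))).
  lra.
Qed.

Lemma score_real_shift_no_events n p L S a a' b g : length L = length S ->
  (forall s, In s S -> s = 0%nat) -> 0 <= a' <= a -> a < 1 -> 0 < b < 1 ->
  score_real n p L S a' b g <= score_real n p L S a b g.
Proof.
  intros HL Hzero Ha' Ha Hb.
  rewrite <- (Rplus_0_r (score_real n p L S a b g)), <- (Rmult_0_l (INR (list_sum S))).
  apply score_real_shift_le; [assumption|].
  intros l s _ Hs; rewrite (Hzero s Hs), Rmult_0_r, Rplus_0_r.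
  pose proof (pow_le_1 a l ltac:(lra)).
  assert (0 <= b * a' ^ l) by (apply Rmult_le_pos; [lra | apply pow_le; lra]).
  assert (b * a' ^ l <= b * a ^ l) by (apply Rmult_le_compat_l; [lra | apply pow_incr; lra]).
  apply geo_nll0_le; nra.
Qed.

Lemma score_real_shift_events n p L S a a' b g k eps :
  0 < a' <= a -> a < 1 -> 0 < b < 1 -> 0 < g -> (1 <= n)%nat ->
  length L = length S -> List.Forall (fun l => (l <= k)%nat) L -> (0 < list_sum S)%nat ->
  INR k * (ln a - ln a') * INR (list_sum S) <= eps ->
  score_real n p L S a' b g <= (1 + eps) * score_real n p L S a b g.
Proof.
  intros Ha' Ha Hb Hg Hn HL Hk HT Hcost.
  assert (Hgap : 0 <= ln a - ln a') by (pose proof (ln_le a' a ltac:(lra) ltac:(lra)); lra).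
  assert (Hshift : score_real n p L S a' b g
                   <= score_real n p L S a b g + INR k * (ln a - ln a') * INR (list_sum S)).
  { apply score_real_shift_le; [assumption|].
    intros l s Hl _.
    assert (INR l <= INR k) by (apply le_INR; rewrite List.Forall_forall in Hk; auto).
    assert (INR l * (ln a - ln a') <= INR k * (ln a - ln a')) by (apply Rmult_le_compat_r; lra).
    pose proof (pos_INR s); pose proof (geo_nll_level_shift s l a a' b Ha' Ha Hb).
    nra. }
  pose proof (score_real_ge1 n p L S a b g ltac:(lra) Hb Hg Hn HL HT).
  assert (0 <= INR k) by apply pos_INR.
  assert (0 < INR (list_sum S)) by (apply lt_0_INR; assumption).
  assert (0 <= INR k * (ln a - ln a') * INR (list_sum S)) by (apply Rmult_le_pos; nra).
  nra.
Qed.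

Lemma mean_ratio S : (0 < length S)%nat ->
  mean S / (1 / INR (length S) + mean S) = INR (list_sum S) / (1 + INR (list_sum S)).
Proof.
  intros HS; unfold mean; change (fold_right Nat.add 0%nat S) with (list_sum S).
  assert (0 < INR (length S)) by (apply lt_0_INR; assumption).
  pose proof (pos_INR (list_sum S)).
  field; lra.
Qed.

Lemma ln_ratio_bound t : 0 < t -> - ln (t / (1 + t)) * t <= 1.
Proof.
  intros Ht.
  replace (- ln (t / (1 + t))) with (ln (1 + / t))
    by (rewrite <- ln_Rinv by (apply Rdiv_lt_0_compat; lra); f_equal; field; lra).
  assert (ln (1 + / t) <= / t).
  { rewrite <- (ln_exp (/ t)) at 2.
    apply ln_le; [pose proof (Rinv_0_lt_compat t Ht); lra | apply exp_ineq1_le]. }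
  replace 1 with (/ t * t) at 2 by (field; lra).
  apply Rmult_le_compat_r; lra.
Qed.

Lemma level_shift_cost_le k eps t a : (0 < k)%nat -> 0 < eps -> 0 < t -> 0 < a <= 1 ->
  INR k * (ln a - eps / INR k * ln (t / (1 + t))) * t <= eps.
Proof.
  intros Hk He Ht Ha.
  assert (Hk0 : 0 < INR k) by (apply lt_0_INR; assumption).
  assert (Hla : ln a <= 0) by (rewrite <- ln_1; apply ln_le; lra).
  pose proof (ln_ratio_bound t Ht) as Hratio.
  replace (INR k * (ln a - eps / INR k * ln (t / (1 + t))) * t)
    with (INR k * t * ln a + eps * (- ln (t / (1 + t)) * t)) by (field; lra).
  assert (0 < INR k * t) by (apply Rmult_lt_0_compat; assumption).
  nra.
Qed.

Lemma rpow_0_l y : rpow 0 y = 0.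
Proof. unfold rpow; destruct (Req_EM_T 0 0); [reflexivity | contradiction]. Qed.

Lemma rpow_pos x y : 0 < x -> 0 < rpow x y.
Proof.
  intros Hx; unfold rpow; destruct (Req_EM_T x 0); [lra | apply exp_pos].
Qed.

Lemma ln_rpow x y : 0 < x -> ln (rpow x y) = y * ln x.
Proof.
  intros Hx; unfold rpow; destruct (Req_EM_T x 0); [lra | apply ln_Rpower].
Qed.

Theorem lemma5 (S : list nat) (gamma : R) (k : nat) (eps : R)
  (L : list nat) (alpha beta : R) :
  (0 < length S)%nat -> 0 < gamma -> (0 < k)%nat -> 0 < eps ->
  geo_optimal S gamma k L alpha beta ->
  let n := INR (length S) in
  let mu := mean S in
  let sigma := mu / (1 / n + mu) in
  let alpha' := rpow sigma (eps / INR k) in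
  alpha' <= alpha ->
  Rbar_le (score_geo L S alpha' beta gamma)
          (Rbar_mult (Finite (1 + eps)) (score_geo L S alpha beta gamma)).
Proof.
  intros HS Hg Hk He [[HL Hlevels] [[Ha Hb] _]] n mu sigma alpha' Ha'.
  assert (Hsigma : sigma = INR (list_sum S) / (1 + INR (list_sum S))) by (apply mean_ratio; assumption).
  assert (Hn : (1 <= length S)%nat) by lia.
  unfold score_geo.
  destruct (Nat.eq_dec (list_sum S) 0) as [HT | HT].
  - assert (Hzero : forall s, In s S -> s = 0%nat)
      by (intros s Hs; pose proof (In_le_list_sum s S Hs); lia).
    assert (Ha'0 : alpha' = 0)
      by (unfold alpha'; rewrite Hsigma, HT, Rdiv_0_l; apply rpow_0_l).
    rewrite !score_aux_finite by (lra || (right; assumption)).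
    pose proof (score_real_shift_no_events (length S) 0 L S alpha alpha' beta gamma HL Hzero
                  ltac:(lra) ltac:(lra) Hb).
    pose proof (score_real_ge0 (length S) 0 L S alpha beta gamma ltac:(lra) Hb Hg Hn (or_intror Hzero)).
    simpl; nra.
  - assert (HTpos : 0 < INR (list_sum S)) by (apply lt_0_INR; lia).
    assert (Hsig : 0 < sigma) by (rewrite Hsigma; apply Rdiv_lt_0_compat; lra).
    assert (Ha'pos : 0 < alpha') by (apply rpow_pos; assumption).
    rewrite !score_aux_finite by (lra || (left; lra)).
    apply (score_real_shift_events _ _ _ _ _ _ _ _ k);
      [lra | lra | exact Hb | exact Hg | exact Hn | exact HL | exact Hlevels | lia |].
    unfold alpha'; rewrite ln_rpow, Hsigma by assumption.
    apply level_shift_cost_le; lra || assumption.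
Qed.
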